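(* Let $F=\{T_1,\dots,T_n\}$ be a finite family of reduction operators relative to a well-ordered set $(G,<)$. Define $B_1=\emptyset$ and, for $2\le i\le n$, \[B_i=B_{i-1}\cup\{s_{i,g_0}\mid g_0\in\mathrm{red}(U_{i-1}\vee T_i)\},\] with $U_{i-1}$ and $s_{i,g_0}$ as defined in the context. Then $B_n$ is a basis of $\mathrm{syz}(F)$.
   Context: Let $\mathbb{K}$ be a field, $(G,<)$ a well-ordered set and $\mathbb{K}G$ the vector space with basis $G$. For $v\neq 0$, $\mathrm{lt}(v)$ is the greatest element of $G$ appearing with nonzero coefficient in $v$. Extend $<$ to $\mathbb{K}G$: $u<v$ if $u=0$ and $v\neq0$, or if $\mathrm{lt}(u)<\mathrm{lt}(v)$; $u\le v$ means $u<v$ or $u=v$. A reduction operator is an idempotent linear endomorphism $T$ of $\mathbb{K}G$ with $T(g)\le g$ for all $g\in G$; $\mathrm{red}(T)=\{g\in G\mid T(g)\neq g\}$. The elements $g-T(g)$, $g\in\mathrm{red}(T)$, form a basis of $\ker T$; the expression of $v\in\ker T$ in this basis is its $T$-decomposition. For every subspace $V$ there is a unique reduction operator $\ker^{-1}(V)$ with kernel $V$; $T\wedge T'=\ker^{-1}(\ker T+\ker T')$, $T\vee T'=\ker^{-1}(\ker T\cap\ker T')$, and for a finite family $\wedge\{T_1,\dots,T_k\}=T_1\wedge\dots\wedge T_k=\ker^{-1}(\sum\ker T_j)$. For a finite family $F'=\{T_1,\dots,T_k\}$: $\mathbf{ker}(F')=\ker T_1\times\dots\times\ker T_k$; $\pi_{F'}(v_1,\dots,v_k)=v_1+\dots+v_k\in\ker(\wedge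 F')$; $\mathrm{syz}(F')=\ker\pi_{F'}$. For $1\le j\le k$ and $g\in\mathrm{red}(T_j)$, $e_{j,g}$ is the tuple with $g-T_j(g)$ at position $j$ and $0$ elsewhere; these form a basis of $\mathbf{ker}(F')$, well-ordered by $e_{j,g}\sqsubset e_{j',g'}$ iff $j<j'$, or $j=j'$ and $g<g'$. The leading term of a nonzero element of $\mathbf{ker}(F')$ is the $\sqsubset$-greatest $e_{j,g}$ in its expansion, and $\mathrm{lt}(\mathrm{syz}(F'))$ is the set of leading terms of nonzero syzygies. Every $v\in\ker(\wedge F')$ has a unique expression $v=\sum\lambda_{j,g}(g-T_j(g))$ with sum over pairs with $g\in\mathrm{red}(T_j)$ and $e_{j,g}\notin\mathrm{lt}(\mathrm{syz}(F'))$: its canonical decomposition with respect to $F'$. For $2\le i\le n$ let $U_{i-1}=T_1\wedge\dots\wedge T_{i-1}$. For $g_0\in\mathrm{red}(U_{i-1}\vee T_i)$ let $v_{i,g_0}=g_0-(U_{i-1}\vee T_i)(g_0)$, which lies in $\ker U_{i-1}\cap\ker T_i$. Let $\sum_{j,g'}\lambda_{j,g'}(g'-T_j(g'))$ be its canonical decomposition with respect to $\{T_1,\dots,T_{i-1}\}$ and $\sum_g\lambda_g(g-T_i(g))$ its $T_i$-decomposition, and set $s_{i,g_0}=\sum_g\lambda_g e_{i,g}-\sum_{j,g'}\lambda_{j,g'}e_{j,g'}\in\mathbf{ker}(F)$, where the $e_{j,g}$ are viewed in $\mathbf{ker}(F)=\ker T_1\times\dots\times\ker T_n$. *)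

From HB Require Import structures.
From mathcomp Require Import all_boot all_order ssralg.
From mathcomp Require Import finmap.
From mathcomp.multinomials Require Import monalg.
From Stdlib Require Import ClassicalEpsilon.

Set Implicit Arguments.
Unset Strict Implicit.
Unset Printing Implicit Defensive.

Import Order.TTheory GRing.Theory.
Local Open Scope ring_scope.
Local Open Scope order_scope.

Section ReductionOperators.

Variables (K : fieldType) (d : Order.disp_t) (G : orderType d).

(* KG = the K-vector space with basis G, i.e. finitely supported G -> K;
   << g >> is the basis vector g, v@_g the coefficient of g in v. *)
Local Notation KG := {malg K[G]}.

(* lt(v): the greatest element of the support of v (None iff v = 0). *)
Definition ltm (v : KG) : option G :=
  foldr (fun g o => Some (if o is Some h then Order.max g h else g))
        None (msupp v).

Definition vlt (u v : KG) : bool :=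
  match ltm u, ltm v with
  | None, Some _ => true
  | Some a, Some b => a < b
  | _, _ => false
  end.
Definition vle (u v : KG) : bool := vlt u v || (u == v).

Definition is_redop (T : KG -> KG) : Prop :=
  [/\ (forall (a : K) (u v : KG), T (a *: u + v) = a *: T u + T v),
      (forall v, T (T v) = T v) &
      (forall g : G, vle (T << g >>) << g >>)].

Definition red (T : KG -> KG) (g : G) : Prop := T << g >> != << g >>.

(* ker^{-1}(W): the (unique) reduction operator with kernel W *)
Definition kerinv (W : KG -> Prop) : KG -> KG :=
  epsilon (inhabits id)
    (fun U => is_redop U /\ forall v, U v = 0 <-> W v).

Definition Tdec (T : KG -> KG) (v : KG) : KG :=
  epsilon (inhabits 0)
    (fun mu => (forall g, g \in msupp mu -> red T g) /\
       v = \sum_(g <- msupp mu) mu@_g *: (<< g >> - T << g >>)).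

Section Family.

Variables (n : nat) (T : 'I_n -> KG -> KG).
(* The family F = {T_1, ..., T_n} is indexed (0-based) by 'I_n:
   paper's T_k is T (k-1). *)

(* elements of ker T_1 x ... x ker T_n are tuples in {ffun 'I_n -> KG} *)
Local Notation tup := {ffun 'I_n -> KG}.

Definition e (j : 'I_n) (g : G) : tup :=
  [ffun k => if k == j then << g >> - T j << g >> else 0].

(* coefficient families on the basis e_{j,g} *)
Local Notation coefs := {malg K[('I_n * G)%type]}.

Definition comb (lam : coefs) : tup :=
  \sum_(p <- msupp lam) lam@_p *: e p.1 p.2.

Definition lexlt (p q : 'I_n * G) : bool :=
  ((p.1 < q.1)%N || ((p.1 == q.1) && (p.2 < q.2))).

Definition ltp (lam : coefs) : option ('I_n * G) :=
  foldr (fun p o => Some (if o is Some q then (if lexlt p q then q else p)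
                          else p))
        None (msupp lam).

(* expansions of elements of ker(F') for F' = {T_(0), ..., T_(i-1)} *)
Definition wsupp (i : nat) (lam : coefs) : Prop :=
  forall p, p \in msupp lam -> (p.1 < i)%N /\ red (T p.1) p.2.

Definition ltsyz (i : nat) (p : 'I_n * G) : Prop :=
  exists lam : coefs, [/\ wsupp i lam, comb lam != 0,
     \sum_(j < n) comb lam j = 0 & ltp lam = Some p].

Definition candec (i : nat) (v : KG) : coefs :=
  epsilon (inhabits 0)
    (fun lam => [/\ wsupp i lam,
                    (forall p, p \in msupp lam -> ~ ltsyz i p) &
                    \sum_(j < n) comb lam j = v]).

Definition sumker (i : nat) (v : KG) : Prop :=
  exists x : 'I_n -> KG, (forall j, T j (x j) = 0) /\
    v = \sum_(j < n | (j < i)%N) x j.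

(* U_{i} (0-based: meet of T_(0), ..., T_(i-1)) and U ∨ T_(i) *)
Definition Uop (i : nat) : KG -> KG := kerinv (sumker i).
Definition Jop (i : 'I_n) : KG -> KG :=
  kerinv (fun v => Uop i v = 0 /\ T i v = 0).

Definition vvec (i : 'I_n) (g0 : G) : KG := << g0 >> - Jop i << g0 >>.

Definition svec (i : 'I_n) (g0 : G) : tup :=
  let lamC := candec i (vvec i g0) in
  let mu := Tdec (T i) (vvec i g0) in
  \sum_(g <- msupp mu) mu@_g *: e i g
  - \sum_(p <- msupp lamC) lamC@_p *: e p.1 p.2.

(* B_m (1-based as in the paper): B_0 = B_1 = empty,
   B_{m+1} = B_m ∪ {s_{m+1,g0} | g0 ∈ red(U_m ∨ T_{m+1})} (paper indices) *)
Fixpoint Bset (m : nat) : tup -> Prop :=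
  match m with
  | 0 => fun _ => False
  | m'.+1 => fun x => Bset m' x \/
      exists (i : 'I_n) (g0 : G), [/\ nat_of_ord i = m', (0 < m')%N,
                                     red (Jop i) g0 & x = svec i g0]
  end.

Definition syz (x : tup) : Prop :=
  (forall j, T j (x j) = 0) /\ \sum_(j < n) x j = 0.

End Family.

Definition is_basis (M : lmodType K) (W B : M -> Prop) : Prop :=
  [/\ (forall b, B b -> W b),
      (forall (s : seq M) (c : M -> K), uniq s -> (forall b, b \in s -> B b) ->
         \sum_(b <- s) c b *: b = 0 -> forall b, b \in s -> c b = 0) &
      (forall w, W w -> exists (s : seq M) (c : M -> K),
         (forall b, b \in s -> B b) /\ w = \sum_(b <- s) c b *: b)].

End ReductionOperators.

(* Each s_(i,g0) is a syzygy whose last nonzero component is the i-th one,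
   namely v_(i,g0), with leading term g0: the canonical decomposition only
   involves T_1, ..., T_(i-1). Ordering syzygies by this "leading position"
   (index of the last nonzero component, then its leading term), the elements
   of B_n have pairwise distinct leading positions, hence are free.
   Conversely, if a syzygy w has leading position (i, g), then w_i is minus
   the sum of the earlier components, so w_i lies in ker U_(i-1) and in
   ker T_i, i.e. in ker (U_(i-1) \/ T_i); hence g is reducible for that
   operator and subtracting w_i[g] s_(i,g) strictly lowers the leading
   position. Well-founded induction then shows that B_n spans syz(F).
   The operators ker^-1(V) and the canonical decompositions exist because,
   for a well-ordered basis, every vector has a normal form modulo a
   subspace avoiding the leading terms of that subspace. *)

From HB Require Import structures.
From mathcomp Require Import all_boot all_order ssralg.
From mathcomp Require Import finmap.
From mathcomp.multinomials Require Import monalg.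
From mathcomp Require Import boolp.
From Stdlib Require Import ClassicalEpsilon.

Set Implicit Arguments.
Unset Strict Implicit.
Unset Printing Implicit Defensive.

Import Order.TTheory GRing.Theory.
Local Open Scope ring_scope.
Local Open Scope order_scope.

Definition lincomb (K : nzRingType) (A : choiceType) (V : lmodType K)
    (f : A -> V) (lam : {malg K[A]}) : V :=
  \sum_(p <- msupp lam) lam@_p *: f p.

Section LinearCombination.
Variables (K : nzRingType) (A : choiceType).
Local Notation KA := {malg K[A]}.

Lemma in_msuppU1 (k q : A) : (q \in msupp (<< k >> : KA)) = (q == k).
Proof. by rewrite msuppU oner_eq0 in_fset1. Qed.

Lemma malgUZ (c : K) (k : A) : << c *g k >> = c *: (<< k >> : KA).
Proof. by apply/malgP => q; rewrite mcoeffZ !mcoeffU mulr_natr. Qed.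

Lemma lincomb_malg (lam : KA) : lincomb (fun k => << k >>) lam = lam.
Proof. by rewrite [RHS]monalgE; apply: eq_bigr => p _; rewrite malgUZ. Qed.

Variable V : lmodType K.
Implicit Types f g : A -> V.

Lemma lincombEw f (D : {fset A}) lam : (msupp lam `<=` D)%fset ->
  lincomb f lam = \sum_(p <- D) lam@_p *: f p.
Proof.
move=> le_lamD; rewrite /lincomb (big_fset_incl _ le_lamD) // => p _.
by move/mcoeff_outdom ->; rewrite scale0r.
Qed.

Lemma lincomb_is_linear f : linear (lincomb f).
Proof.
move=> a u v; pose D := (msupp u `|` msupp v `|` msupp (a *: u + v))%fset.
rewrite !(lincombEw _ (D := D)); first last;
  try by apply/fsubsetP => p p_in; rewrite !in_fsetU p_in ?orbT.
rewrite scaler_sumr -big_split; apply: eq_bigr => p _.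
by rewrite mcoeffD mcoeffZ scalerDl scalerA.
Qed.

HB.instance Definition _ f :=
  GRing.isLinear.Build K KA V *:%R (lincomb f) (lincomb_is_linear f).

End LinearCombination.

Section LinearCombinationTheory.
Variables (K : nzRingType) (A : choiceType) (V : lmodType K).
Implicit Types f g : A -> V.

Lemma lincombU f c k : lincomb f << c *g k >> = c *: f k.
Proof. by rewrite (lincombEw _ msuppU_le) big_seq_fset1 mcoeffUU. Qed.

Lemma eq_lincomb f g lam : {in msupp lam, f =1 g} -> lincomb f lam = lincomb g lam.
Proof. by move=> fg; rewrite /lincomb !big_seq; apply: eq_bigr => p /fg ->. Qed.

Lemma lincomb_eq0 f lam : {in msupp lam, forall p, f p = 0} -> lincomb f lam = 0.
Proof.
by move=> f0; rewrite /lincomb big_seq big1 // => p /f0 ->; rewrite scaler0.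
Qed.

Lemma linear_lincomb (U W : lmodType K) (phi : {linear U -> W}) (f : A -> U) lam :
  phi (lincomb f lam) = lincomb (phi \o f) lam.
Proof. by rewrite linear_sum; apply: eq_bigr => p _; rewrite linearZ. Qed.

Lemma lincomb_ffunE (I : finType) (f : A -> {ffun I -> V}) lam i :
  lincomb f lam i = lincomb (fun p => f p i) lam.
Proof. by rewrite sum_ffunE; apply: eq_bigr => p _; rewrite ffunE. Qed.

Lemma sum_lincomb_ffun (I : finType) (f : A -> {ffun I -> V}) lam :
  \sum_i lincomb f lam i = lincomb (fun p => \sum_i f p i) lam.
Proof.
under eq_bigr => i _ do rewrite lincomb_ffunE.
by rewrite /lincomb exchange_big; apply: eq_bigr => p _; rewrite scaler_sumr.
Qed.

End LinearCombinationTheory.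

Lemma lincomb_comp (K : nzRingType) (A B : choiceType) (V : lmodType K)
    (f : B -> V) (h : A -> B) (lam : {malg K[A]}) :
  lincomb f (lincomb (fun a => << h a >>) lam) = lincomb (f \o h) lam.
Proof.
rewrite (linear_lincomb (lincomb f)); apply: eq_lincomb => a _.
by rewrite /= lincombU scale1r.
Qed.

Lemma mcoeff_lincomb (K : nzRingType) (A B : choiceType) (f : A -> {malg K[B]})
    (lam : {malg K[A]}) q :
  (lincomb f lam)@_q = \sum_(p <- msupp lam) lam@_p * (f p)@_q.
Proof. by rewrite raddf_sum; apply: eq_bigr => p _; rewrite /= mcoeffZ. Qed.

Section Subspace.
Variables (K : nzRingType) (V : lmodType K).

Definition subspace (W : V -> Prop) :=
  W 0 /\ forall a u v, W u -> W v -> W (a *: u + v).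

Variables (W : V -> Prop) (W_sub : subspace W).

Lemma subspace0 : W 0. Proof. by case: W_sub. Qed.

Lemma subspaceZD a u v : W u -> W v -> W (a *: u + v).
Proof. by case: W_sub => _; apply. Qed.

Lemma subspaceZ a u : W u -> W (a *: u).
Proof. by move=> Wu; have := subspaceZD a Wu subspace0; rewrite addr0. Qed.

Lemma subspaceD u v : W u -> W v -> W (u + v).
Proof. by move=> Wu Wv; have := subspaceZD 1 Wu Wv; rewrite scale1r. Qed.

Lemma subspaceB u v : W u -> W v -> W (u - v).
Proof. by move=> Wu Wv; have := subspaceZD (-1) Wv Wu; rewrite scaleN1r addrC. Qed.

Lemma subspace_sum (I : Type) (r : seq I) (P : pred I) (F : I -> V) :
  (forall i, P i -> W (F i)) -> W (\sum_(i <- r | P i) F i).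
Proof. by move=> WF; apply: big_ind => //; [apply: subspace0|apply: subspaceD]. Qed.

Lemma subspace_lincomb (A : choiceType) (f : A -> V) lam :
  {in msupp lam, forall p, W (f p)} -> W (lincomb f lam).
Proof.
by move=> Wf; rewrite /lincomb big_seq; apply: subspace_sum => p /Wf /subspaceZ.
Qed.

(* Coefficients are indexed by the vectors themselves, so repetitions merge. *)
Definition spanned (B : V -> Prop) (w : V) :=
  exists2 lam : {malg K[V]}, {in msupp lam, forall b, B b} & w = lincomb id lam.

Lemma spanned0 B : spanned B 0.
Proof. by exists 0 => [b|]; rewrite ?msupp0 ?linear0. Qed.

Lemma spannedZD B a b w : B b -> spanned B w -> spanned B (a *: b + w).
Proof.
move=> Bb [lam Blam ->]; exists (<< a *g b >> + lam); last first.
  by rewrite linearD /= lincombU.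
move=> c /(fsubsetP (msuppD_le _ _)); rewrite in_fsetU => /orP[|/Blam //].
by move/(fsubsetP msuppU_le); rewrite in_fset1 => /eqP ->.
Qed.

End Subspace.

Section SeqMax.
Variables (A : eqType) (R : A -> A -> Prop).

Lemma seq_max (s : seq A) :
  (forall x y z, x \in s -> y \in s -> z \in s -> R x y -> R y z -> R x z) ->
  (forall x y, x \in s -> y \in s -> x != y -> R x y \/ R y x) ->
  s != [::] -> exists2 m, m \in s & forall y, y \in s -> y != m -> R y m.
Proof.
elim: s => [|x s IH] // R_trans R_total _.
have [-> | s_neq0] := eqVneq s [::].
  by exists x => [|y]; rewrite ?mem_head // inE => /eqP ->; rewrite eqxx.
have sub_s y : y \in s -> y \in x :: s by rewrite inE => ->; rewrite orbT.
have [||m ms m_max] := IH _ _ s_neq0.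
- by move=> y z t /sub_s ys /sub_s zs /sub_s ts; apply: R_trans.
- by move=> y z /sub_s ys /sub_s zs; apply: R_total.
have [-> | xm] := eqVneq x m.
  by exists m => [|y]; rewrite ?mem_head // inE => /predU1P[->|/m_max]; rewrite ?eqxx.
case: (R_total x m (mem_head _ _) (sub_s _ ms) xm) => [Rxm | Rmx].
  by exists m; rewrite ?sub_s // => y; rewrite inE => /predU1P[-> _|/m_max].
exists x; rewrite ?mem_head // => y; rewrite inE => /predU1P[-> | ys _].
  by rewrite eqxx.
have [-> // | ym] := eqVneq y m.
exact: R_trans (sub_s _ ys) (sub_s _ ms) (mem_head _ _) (m_max y ys ym) Rmx.
Qed.

End SeqMax.

Section FoldrMax.
Variables (A : eqType) (le : rel A) (sel : A -> A -> A).
Hypotheses (le_refl : reflexive le) (le_tr : transitive le).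
Hypotheses (sel_l : forall x y, le x (sel x y)) (sel_r : forall x y, le y (sel x y)).
Hypothesis sel_in : forall x y, (sel x y == x) || (sel x y == y).

Lemma foldr_selP (s : seq A) m :
  foldr (fun x o => Some (if o is Some y then sel x y else x)) None s = Some m ->
  m \in s /\ {in s, forall y, le y m}.
Proof.
elim: s m => [|x s IH] m //= [<-].
case E: (foldr _ None s) => [y|].
  have [ys y_max] := IH y E; split.
    by case/orP: (sel_in x y) => /eqP ->; rewrite inE ?eqxx ?ys ?orbT.
  move=> z; rewrite inE => /predU1P[->|/y_max zy]; first exact: sel_l.
  exact: le_tr zy (sel_r x y).
by case: s E {IH} => // _; split=> [|z]; rewrite ?mem_head // inE => /eqP ->.
Qed.

End FoldrMax.

Section LeadingTerm.
Variables (K : fieldType) (d : Order.disp_t) (G : orderType d).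
Local Notation KG := {malg K[G]}.
Implicit Types (u v : KG) (g h : G).

Lemma ltm_Some v g : ltm v = Some g -> g \in msupp v /\ {in msupp v, forall h, h <= g}.
Proof.
apply: foldr_selP => [x|y x z|x y|x y|x y]; rewrite ?le_max ?lexx ?orbT //.
- exact: le_trans.
- by rewrite /Order.max; case: ifP; rewrite eqxx ?orbT.
Qed.

Lemma ltm_None v : ltm v = None -> v = 0.
Proof.
rewrite /ltm; case E: (msupp v : seq G) => [|g s] // _.
by apply/malgP => g; rewrite mcoeff0 mcoeff_outdom // -[_ \in _]/(g \in (msupp v : seq G)) E.
Qed.

Lemma ltm_neq0 v : v != 0 -> exists g, ltm v = Some g.
Proof.
by case E: (ltm v) => [g|]; [exists g | rewrite (ltm_None E) eqxx].
Qed.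

Lemma ltm_char v g : g \in msupp v -> {in msupp v, forall h, h <= g} -> ltm v = Some g.
Proof.
move=> g_in g_max; case E: (ltm v) => [g'|]; last first.
  by move: g_in; rewrite (ltm_None E) msupp0 in_fset0.
have [g'_in g'_max] := ltm_Some E.
by congr Some; apply/eqP; rewrite eq_le g_max ?g'_max.
Qed.

Lemma ltmN v : ltm (- v) = ltm v.
Proof. by rewrite /ltm msuppN. Qed.

Lemma ltm_U g : ltm (<< g >> : KG) = Some g.
Proof. by apply: ltm_char => [|h]; rewrite in_msuppU1 // => /eqP ->. Qed.

Lemma ltmD_dominant u v g : ltm v = Some g -> {in msupp u, forall h, h < g} ->
  ltm (u + v) = Some g.
Proof.
move=> /ltm_Some[g_in g_max] u_lt; apply: ltm_char.
  rewrite -mcoeff_neq0 mcoeffD mcoeff_outdom ?add0r ?mcoeff_neq0 //.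
  by apply/negP => /u_lt; rewrite ltxx.
move=> h /(fsubsetP (msuppD_le _ _)); rewrite in_fsetU => /orP[/u_lt/ltW|/g_max] //.
Qed.

Lemma vlt_U u g : {in msupp u, forall h, h < g} -> vlt u << g >>.
Proof.
rewrite /vlt ltm_U; case E: (ltm u) => [h|] // u_lt.
exact: u_lt (ltm_Some E).1.
Qed.

End LeadingTerm.

Section NormalForm.
Variables (K : fieldType) (A : choiceType) (prec : rel A).
Hypotheses (prec_wf : well_founded prec) (prec_trans : transitive prec).
Hypothesis prec_total : forall x y, x != y -> prec x y || prec y x.
Local Notation KA := {malg K[A]}.
Implicit Types lam : KA.
Variables (P : KA -> Prop) (L : A -> Prop).
Hypothesis P_sub : subspace P.
Hypothesis L_lead : forall p, L p -> exists2 t, P t &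
  p \in msupp t /\ {in msupp t, forall q, (q == p) || prec q p}.

Lemma L_supp_cases lam : {in msupp lam, forall q, ~ L q} \/
  exists m, [/\ m \in msupp lam, L m &
                {in msupp lam, forall q, L q -> (q == m) || prec q m}].
Proof.
set s := [seq q <- msupp lam | `[< L q >]].
have s_mem q : (q \in s) = (q \in msupp lam) && `[< L q >] by rewrite mem_filter andbC.
have [s0 | s_neq0] := eqVneq s [::].
  by left => q q_in /asboolP Lq; move: (s_mem q); rewrite s0 q_in Lq.
right; have [||m] := seq_max (R := fun x y => prec x y) _ _ s_neq0.
- by move=> x y z _ _ _; apply: prec_trans.
- by move=> x y _ _ /prec_total /orP.
rewrite s_mem => /andP[m_in /asboolP Lm] m_max; exists m; split => // q q_in Lq.
case: eqP => [//|/eqP qm] /=; apply: m_max qm.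
by rewrite s_mem q_in; apply/asboolP.
Qed.

Lemma reduce_step p lam : L p -> {in msupp lam, forall q, L q -> (q == p) || prec q p} ->
  exists2 s, P s & {in msupp (lam - s), forall q, L q -> prec q p}.
Proof.
move=> /L_lead[t Pt [p_t t_le]] lam_le.
have tp_neq0 : t@_p != 0 by rewrite mcoeff_neq0.
exists ((lam@_p / t@_p) *: t); first exact: subspaceZ.
move=> q q_in Lq; have qp : q != p.
  apply: contraTneq q_in => ->.
  by rewrite -mcoeff_eq0 mcoeffB mcoeffZ mulfVK // subrr.
move: q_in => /(fsubsetP (msuppB_le _ _)); rewrite in_fsetU.
by case/orP => [/lam_le/(_ Lq)|/(fsubsetP (msuppZ_le _ _))/t_le]; rewrite (negbTE qp).
Qed.

Lemma reduce_below p lam : {in msupp lam, forall q, L q -> prec q p} ->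
  exists2 s, P s & {in msupp (lam - s), forall q, ~ L q}.
Proof.
elim/(well_founded_ind prec_wf): p lam => p IH lam lam_lt.
have [lam_nf | [m [m_in Lm m_max]]] := L_supp_cases lam.
  by exists 0; rewrite ?subr0 //; apply: subspace0.
have [s1 Ps1 s1_lt] := reduce_step Lm m_max.
have [s2 Ps2 s2_nf] := IH m (lam_lt m m_in Lm) _ s1_lt.
by exists (s1 + s2); [apply: subspaceD | rewrite opprD addrA].
Qed.

Lemma reduce_exists lam : exists2 s, P s & {in msupp (lam - s), forall q, ~ L q}.
Proof.
have [lam_nf | [m [m_in Lm m_max]]] := L_supp_cases lam.
  by exists 0; rewrite ?subr0 //; apply: subspace0.
have [s1 Ps1 s1_lt] := reduce_step Lm m_max.
have [s2 Ps2 s2_nf] := reduce_below s1_lt.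
by exists (s1 + s2); [apply: subspaceD | rewrite opprD addrA].
Qed.

End NormalForm.

Section KernelInverse.
Variables (K : fieldType) (d : Order.disp_t) (G : orderType d).
Hypothesis wf_G : well_founded (fun x y : G => x < y).
Local Notation KG := {malg K[G]}.
Variables (W : KG -> Prop) (W_sub : subspace W).

Definition Wlead (g : G) := exists2 w, W w & w != 0 /\ ltm w = Some g.

Definition is_nf (v r : KG) := W (v - r) /\ {in msupp r, forall g, ~ Wlead g}.

Lemma is_nf_uniq v r1 r2 : is_nf v r1 -> is_nf v r2 -> r1 = r2.
Proof.
move=> [W1 r1_nf] [W2 r2_nf]; apply/eqP; rewrite -subr_eq0; apply/negP => /negP r_neq0.
have [g lt_r] := ltm_neq0 r_neq0; have [g_in _] := ltm_Some lt_r.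
have W_r : W (r1 - r2).
  have -> : r1 - r2 = (v - r2) - (v - r1) by rewrite opprB [RHS]addrC addrA subrK.
  exact: subspaceB.
move: g_in => /(fsubsetP (msuppB_le _ _)); rewrite in_fsetU.
by case/orP => [/r1_nf|/r2_nf]; apply; exists (r1 - r2).
Qed.

Lemma is_nf_exists v : exists r, is_nf v r.
Proof.
have Wlead_lead g : Wlead g -> exists2 t, W t &
    g \in msupp t /\ {in msupp t, forall h, (h == g) || (h < g)}.
  case=> w Ww [_ /ltm_Some[g_in g_max]]; exists w => //; split => // h.
  by move/g_max; rewrite le_eqVlt.
have [s Ws s_nf] := reduce_exists wf_G (@lt_trans _ _) (@lt_total _ _) W_sub Wlead_lead v.
by exists (v - s); split => //; rewrite opprB addrC subrK.
Qed.

(* A term of r above g would be the leading term of v - r, which lies in W. *)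
Lemma is_nf_le v r g : is_nf v r -> {in msupp v, forall h, h <= g} ->
  {in msupp r, forall h, h <= g}.
Proof.
move=> [Wvr r_nf] v_le h h_in; rewrite leNgt; apply/negP => gh.
have [|m lt_r] := ltm_neq0 (v := r).
  by apply: contraTneq h_in => ->; rewrite msupp0 in_fset0.
have [m_in m_max] := ltm_Some lt_r.
have gm : g < m := lt_le_trans gh (m_max h h_in).
have lt_vr : ltm (v - r) = Some m.
  by apply: ltmD_dominant; rewrite ?ltmN // => k /v_le kg; apply: le_lt_trans kg gm.
apply: (r_nf m m_in); exists (v - r) => //; split => //.
by apply: contra_eq_neq lt_vr => ->; rewrite /ltm msupp0.
Qed.

Definition nf (v : KG) : KG := epsilon (inhabits 0) (is_nf v).

Lemma nfP v : is_nf v (nf v).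
Proof. exact: epsilon_spec (is_nf_exists v). Qed.

Lemma nf_eq v r : is_nf v r -> nf v = r.
Proof. exact: is_nf_uniq (nfP v). Qed.

Lemma nf_redop : is_redop nf.
Proof.
split.
- move=> a u v; apply: nf_eq; have [Wu u_nf] := nfP u; have [Wv v_nf] := nfP v.
  split.
    have -> : a *: u + v - (a *: nf u + nf v) = a *: (u - nf u) + (v - nf v).
      by rewrite scalerBr opprD addrACA.
    exact: subspaceZD.
  move=> g /(fsubsetP (msuppD_le _ _)); rewrite in_fsetU.
  by case/orP => [/(fsubsetP (msuppZ_le _ _))/u_nf|/v_nf].
- move=> v; apply: nf_eq; split; [rewrite subrr; exact: subspace0 | exact: (nfP v).2].
move=> g; have [Wg | nWg] := pselect (Wlead g); last first.
  rewrite /vle (@nf_eq << g >> << g >>) ?eqxx ?orbT //.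
  by split=> [|h]; rewrite ?subrr ?in_msuppU1; [apply: subspace0 | move/eqP ->].
have [_ g_nf] := nfP << g >>.
rewrite /vle vlt_U // => h h_in; rewrite lt_neqAle.
have -> : h <= g by apply: is_nf_le (nfP _) _ h h_in => k; rewrite in_msuppU1 => /eqP ->.
by rewrite andbT; apply/eqP => hg; apply: (g_nf h h_in); rewrite hg.
Qed.

Lemma nf_eq0 v : nf v = 0 <-> W v.
Proof.
split => [nf_v0 | Wv]; first by have [] := nfP v; rewrite nf_v0 subr0.
by apply: nf_eq; split => [|g]; rewrite ?subr0 ?msupp0 ?in_fset0.
Qed.

Lemma kerinvP : is_redop (kerinv W) /\ forall v, kerinv W v = 0 <-> W v.
Proof.
apply: (epsilon_spec (inhabits id) (fun U => is_redop U /\ forall v, U v = 0 <-> W v)).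
by exists nf; split; [apply: nf_redop | apply: nf_eq0].
Qed.

End KernelInverse.

Section ReductionOperator.
Variables (K : fieldType) (d : Order.disp_t) (G : orderType d).
Local Notation KG := {malg K[G]}.
Variables (T : KG -> KG) (T_redop : is_redop T).

Lemma redop_linear : linear T. Proof. by case: T_redop. Qed.

HB.instance Definition _ := GRing.isLinear.Build K KG KG *:%R T redop_linear.

Definition redvec (g : G) : KG := << g >> - T << g >>.

Lemma redvec_ker g : T (redvec g) = 0.
Proof. by case: T_redop => _ T_idem _; rewrite linearB /= T_idem subrr. Qed.

Lemma redop_supp_lt g : red T g -> {in msupp (T << g >>), forall h, h < g}.
Proof.
move=> g_red h h_in; case: T_redop => _ _ /(_ g).
rewrite /vle (negbTE g_red) orbF /vlt ltm_U.
case E: (ltm _) => [a|] ag; first exact: le_lt_trans ((ltm_Some E).2 h h_in) ag.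
by move: h_in; rewrite (ltm_None E) msupp0 in_fset0.
Qed.

Lemma redvec_supp g : {in msupp (redvec g), forall h, h <= g}.
Proof.
move=> h /(fsubsetP (msuppB_le _ _)); rewrite in_fsetU in_msuppU1.
case/orP => [/eqP -> // | h_in].
have [Tg | g_red] := eqVneq (T << g >>) << g >>.
  by move: h_in; rewrite Tg in_msuppU1 => /eqP ->.
exact/ltW/(redop_supp_lt g_red).
Qed.

Lemma redvec_coeff g : red T g -> (redvec g)@_g = 1.
Proof.
move=> g_red; rewrite mcoeffB mcoeffUU mcoeff_outdom ?subr0 //.
by apply/negP => /(redop_supp_lt g_red); rewrite ltxx.
Qed.

Lemma redvec_ltm g : red T g -> ltm (redvec g) = Some g.
Proof.
move=> g_red; apply: ltm_char (@redvec_supp g).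
by rewrite -mcoeff_neq0 redvec_coeff // oner_eq0.
Qed.

Lemma ker_lincomb_redvec v : T v = 0 -> lincomb redvec v = v.
Proof.
move=> Tv; have -> : lincomb redvec v =
    lincomb (fun g => << g >>) v - lincomb (T \o (fun g => << g >>)) v.
  by rewrite /lincomb -sumrB; apply: eq_bigr => g _; rewrite scalerBr.
by rewrite -(linear_lincomb T) lincomb_malg /= Tv subr0.
Qed.

Lemma ker_ltm_red v g : T v = 0 -> ltm v = Some g -> red T g.
Proof.
(* In v = sum_h v_h (h - T h) only h = g could contribute to the coefficient
   of g, and g - T g = 0 when g is not reducible. *)
move=> Tv /ltm_Some[g_in g_max]; apply/eqP => Tg; move: g_in.
rewrite -mcoeff_neq0 -(ker_lincomb_redvec Tv) mcoeff_lincomb big_seq big1 ?eqxx //.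
move=> h h_in; have [-> | hg] := eqVneq h g.
  by rewrite /redvec Tg subrr mcoeff0 mulr0.
rewrite [(redvec h)@_g]mcoeff_outdom ?mulr0 //; apply/negP => /redvec_supp gh.
by move: (g_max h h_in); rewrite le_eqVlt (negbTE hg) /= ltNge gh.
Qed.

Lemma Tdec_exists v : T v = 0 ->
  exists mu : KG, {in msupp mu, forall g, red T g} /\ v = lincomb redvec mu.
Proof.
move=> Tv.
pose mu : KG := [malg g in msupp v => if T << g >> != << g >> then v@_g else 0].
have muE g : mu@_g = if T << g >> != << g >> then v@_g else 0.
  by rewrite mcoeffE; case: msuppP => //; case: ifP.
have mu_v : (msupp mu `<=` msupp v)%fset.
  by apply/fsubsetP => g; rewrite -!mcoeff_neq0 muE; case: ifP; rewrite ?eqxx.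
exists mu; split.
  by move=> g; rewrite -mcoeff_neq0 muE; case: ifP; rewrite ?eqxx.
rewrite -{1}(ker_lincomb_redvec Tv) (lincombEw _ mu_v) (lincombEw _ (fsubset_refl _)).
apply: eq_bigr => g _; rewrite muE.
by have [Tg | //] := eqVneq (T << g >>) << g >>; rewrite /redvec Tg subrr !scaler0.
Qed.

Lemma Tdec_spec v : T v = 0 ->
  {in msupp (Tdec T v), forall g, red T g} /\ v = lincomb redvec (Tdec T v).
Proof. by move/Tdec_exists/(epsilon_spec (inhabits 0)). Qed.

End ReductionOperator.

Section LexOrder.
Variables (d : Order.disp_t) (G : orderType d) (n : nat).
Implicit Types p q r : 'I_n * G.
Local Notation lexlt := (@lexlt d G n).

Lemma lexlt_trans : transitive lexlt.
Proof.
move=> q p r; rewrite /lexlt => /orP[h1 | /andP[/eqP e1 h1]] /orP[h2 | /andP[/eqP e2 h2]].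
- by rewrite (ltn_trans h1 h2).
- by rewrite -e2 h1.
- by rewrite e1 h2.
- by rewrite e1 e2 eqxx (lt_trans h1 h2) orbT.
Qed.

Lemma lexlt_total p q : p != q -> lexlt p q || lexlt q p.
Proof.
case: p q => [i g] [j h]; rewrite /lexlt /= => pq.
have [ij | ji | /val_inj ij] := ltngtP i j; rewrite ?orbT //; subst j.
by rewrite eqxx /= lt_total //; apply: contraNneq pq => ->.
Qed.

Lemma lexlt_wf : well_founded (fun x y : G => x < y) -> well_founded lexlt.
Proof.
move=> wf_G [i g]; move: {2}(nat_of_ord i) (erefl (nat_of_ord i)) => k.
elim/ltn_ind: k i g => k IHk i g ik; elim/(well_founded_ind wf_G): g => g IHg.
constructor => -[j h] /orP[/= ji | /andP[/= /eqP ji hg]].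
  by apply: (IHk j) => //; rewrite -ik.
by subst j; apply: IHg.
Qed.

Lemma ltp_Some (K : fieldType) (lam : {malg K[('I_n * G)%type]}) p : ltp lam = Some p ->
  p \in msupp lam /\ {in msupp lam, forall q, (q == p) || lexlt q p}.
Proof.
apply: (@foldr_selP _ (fun q p => (q == p) || lexlt q p)
                      (fun p q => if lexlt p q then q else p)).
- by move=> q; rewrite eqxx.
- move=> y x z /predU1P[-> // | xy] /predU1P[<- | yz]; first by rewrite xy orbT.
  by rewrite (lexlt_trans xy yz) orbT.
- by move=> q r; case: ifP => qr; rewrite ?qr ?eqxx ?orbT.
- move=> q r; case: ifP => [_ | qr]; rewrite ?eqxx //.
  by case: (eqVneq r q) => [-> | /lexlt_total]; rewrite ?eqxx //= qr orbF.
- by move=> q r; case: ifP; rewrite eqxx ?orbT.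
Qed.

End LexOrder.

Section TupleLead.
Variables (K : fieldType) (d : Order.disp_t) (G : orderType d) (n : nat).
Local Notation KG := {malg K[G]}.
Local Notation tup := {ffun 'I_n -> KG}.
Local Notation lexlt := (@lexlt d G n).
Implicit Types (w b : tup) (p q r : 'I_n * G).

(* For w in ker(F), e_(p.1, p.2) is the leading term of the expansion of w in
   the basis (e_(j,g)). *)
Definition tlead w p :=
  [/\ w p.1 != 0, forall j : 'I_n, (p.1 < j)%N -> w j = 0 & ltm (w p.1) = Some p.2].

Lemma tlead_uniq w p q : tlead w p -> tlead w q -> p = q.
Proof.
case: p q => [i g] [j h] [/= wi w_gti lt_wi] [/= wj w_gtj lt_wj].
have ij : i = j.
  have [/w_gti w0 | /w_gtj w0 | /val_inj //] := ltngtP i j.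
    by rewrite w0 eqxx in wj.
  by rewrite w0 eqxx in wi.
by subst j; move: lt_wi; rewrite lt_wj => -[->].
Qed.

Lemma tlead_exists w : w != 0 -> exists p, tlead w p.
Proof.
move=> w_neq0; have /existsP[j0 wj0] : [exists j, w j != 0].
  apply: contraNT w_neq0 => /existsPn w0.
  by apply/eqP/ffunP => j; rewrite ffunE; apply/eqP/negPn/w0.
case: (@arg_maxnP _ j0 (fun j => w j != 0) val wj0) => i wi i_max.
have [g lt_wi] := ltm_neq0 wi; exists (i, g); split => // j ij.
by apply/eqP; apply: contraTT ij => wj; rewrite -leqNgt; apply: i_max.
Qed.

Lemma tlead_coeff w p : tlead w p -> (w p.1)@_p.2 != 0.
Proof. by case=> _ _ /ltm_Some[+ _]; rewrite mcoeff_neq0. Qed.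

Lemma tlead_coeff_gt w p q : tlead w p -> lexlt p q -> (w q.1)@_q.2 = 0.
Proof.
case: p q => [i g] [j h] [_ w_gt lt_wi] /orP[/= ij | /andP[/= /eqP <- gh]].
  by rewrite w_gt ?mcoeff0.
apply: mcoeff_outdom; apply/negP => /(ltm_Some lt_wi).2.
by rewrite leNgt gh.
Qed.

Lemma tlead_lt w p q : tlead w q -> (forall r, ~~ lexlt r p -> (w r.1)@_r.2 = 0) ->
  lexlt q p.
Proof.
by move=> lq w0; apply: contraT => /w0 wq0; move: (tlead_coeff lq); rewrite wq0 eqxx.
Qed.

Lemma tlead_cancel w b i g : tlead w (i, g) -> tlead b (i, g) -> (b i)@_g = 1 ->
  let w' := w - (w i)@_g *: b in
  w' = 0 \/ exists2 q, tlead w' q & lexlt q (i, g).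
Proof.
move=> lw lb bp1 w'; have [-> | w'_neq0] := eqVneq w' 0; [by left | right].
have [q lq] := tlead_exists w'_neq0; exists q => //; apply: tlead_lt lq _ => r r_ge.
rewrite /w' !ffunE mcoeffB mcoeffZ.
have [-> | rp] := eqVneq r (i, g); first by rewrite bp1 mulr1 subrr.
have pr : lexlt (i, g) r by move/lexlt_total: rp; rewrite (negbTE r_ge).
by rewrite (tlead_coeff_gt lw pr) (tlead_coeff_gt lb pr) mulr0 subrr.
Qed.

Lemma tlead_free (s : seq tup) (c : tup -> K) :
  uniq s -> {in s, forall b, exists p, tlead b p} ->
  {in s &, forall b b' p, tlead b p -> tlead b' p -> b = b'} ->
  \sum_(b <- s) c b *: b = 0 -> {in s, forall b, c b = 0}.
Proof.
move=> s_uniq s_lead s_inj s0.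
pose s' := [seq b <- s | c b != 0].
suff s'0 : s' = [::].
  move=> b bs; apply/eqP; apply: contraT => cb.
  suff : b \in s' by rewrite s'0.
  by rewrite mem_filter cb.
apply/eqP; apply: contraT => s'_neq0.
pose R b1 b2 := exists p1 p2, [/\ tlead b1 p1, tlead b2 p2 & lexlt p1 p2].
have s's b : b \in s' -> b \in s by rewrite mem_filter => /andP[].
have [||m ms' m_max] := seq_max (R := R) _ _ s'_neq0.
- move=> x y z _ _ _ [p1 [p2 [l1 l2 p12]]] [p2' [p3 [l2' l3 p23]]].
  rewrite -(tlead_uniq l2 l2') in p23.
  by exists p1, p3; split => //; apply: lexlt_trans p12 p23.
- move=> x y /s's xs /s's ys xy.
  have [[px lx] [py ly]] := (s_lead x xs, s_lead y ys).
  have pxy : px != py by apply: contra_neq xy => pxy; apply: s_inj lx _; rewrite ?pxy.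
  by case/orP: (lexlt_total pxy) => ?; [left; exists px, py | right; exists py, px].
have [pm lm] := s_lead m (s's m ms').
have coord_s : \sum_(b <- s) c b * (b pm.1)@_pm.2 = 0.
  transitivity (((\sum_(b <- s) c b *: b) pm.1)@_pm.2); last by rewrite s0 ffunE mcoeff0.
  by rewrite sum_ffunE raddf_sum; apply: eq_bigr => b _; rewrite /= ffunE mcoeffZ.
move: coord_s; rewrite (bigD1_seq m (s's m ms') s_uniq) /= big1_seq ?addr0.
  move/eqP; rewrite mulf_eq0 (negbTE (tlead_coeff lm)) orbF.
  by move: ms'; rewrite mem_filter => /andP[/negbTE ->].
move=> b /andP[bm bs]; have [-> | cb] := eqVneq (c b) 0; first by rewrite mul0r.
have b's : b \in s' by rewrite mem_filter cb.
have [pb [pm' [lb lm' pbm]]] := m_max b b's bm.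
by rewrite -(tlead_uniq lm lm') in pbm; rewrite (tlead_coeff_gt lb pbm) mulr0.
Qed.

End TupleLead.

Section Family.
Variables (K : fieldType) (d : Order.disp_t) (G : orderType d).
Hypothesis wf_G : well_founded (fun x y : G => x < y).
Local Notation KG := {malg K[G]}.
Variables (n : nat) (T : 'I_n -> KG -> KG).
Hypothesis T_redop : forall j, is_redop (T j).
Local Notation coefs := {malg K[('I_n * G)%type]}.

HB.instance Definition _ j :=
  GRing.isLinear.Build K KG KG *:%R (T j) (redop_linear (T_redop j)).

Lemma eE j g k : e T j g k = if k == j then redvec (T j) g else 0.
Proof. by rewrite ffunE. Qed.

Lemma e_ker j g k : T k (e T j g k) = 0.
Proof. by rewrite eE; case: eqP => [-> | _]; [apply: redvec_ker | apply: linear0]. Qed.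

Lemma sum_e j g : \sum_(k < n) e T j g k = redvec (T j) g.
Proof.
by rewrite (bigD1 j) //= eE eqxx big1 ?addr0 // => k /negbTE kj; rewrite eE kj.
Qed.

Lemma combE (lam : coefs) : comb T lam = lincomb (fun p => e T p.1 p.2) lam.
Proof. by []. Qed.

Lemma sum_comb (lam : coefs) :
  \sum_(k < n) comb T lam k = lincomb (fun p => redvec (T p.1) p.2) lam.
Proof. by rewrite combE sum_lincomb_ffun; apply: eq_lincomb => p _; apply: sum_e. Qed.

Lemma sumker_subspace i : subspace (sumker T i).
Proof.
split; first by exists (fun _ => 0); split => [j|]; rewrite ?linear0 ?big1.
move=> a u v [x [Tx ->]] [y [Ty ->]]; exists (fun j => a *: x j + y j); split.
  by move=> j; rewrite linearP /= Tx Ty scaler0 addr0.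
by rewrite scaler_sumr -big_split.
Qed.

Lemma sumker0 v : sumker T 0 v -> v = 0.
Proof. by case=> x [_ ->]; rewrite big_pred0. Qed.

Lemma UopP i : is_redop (Uop T i) /\ forall v, Uop T i v = 0 <-> sumker T i v.
Proof. exact (kerinvP wf_G (sumker_subspace i)). Qed.

HB.instance Definition _ i :=
  GRing.isLinear.Build K KG KG *:%R (Uop T i) (redop_linear (UopP i).1).

Lemma JopP (i : 'I_n) :
  is_redop (Jop T i) /\ forall v, Jop T i v = 0 <-> Uop T i v = 0 /\ T i v = 0.
Proof.
have J_sub : subspace (fun v => Uop T i v = 0 /\ T i v = 0).
  split; first by rewrite !linear0.
  by move=> a u v [Uu Tu] [Uv Tv]; rewrite !linearP /= Uu Tu Uv Tv scaler0 addr0.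
exact (kerinvP wf_G J_sub).
Qed.

Lemma wsupp_subspace i : subspace (wsupp T i).
Proof.
split=> [p|a u v wu wv p]; first by rewrite msupp0 in_fset0.
move/(fsubsetP (msuppD_le _ _)); rewrite in_fsetU.
by case/orP => [/(fsubsetP (msuppZ_le _ _))/wu | /wv].
Qed.

Lemma comb_wsupp_eq0 i (lam : coefs) (k : 'I_n) :
  wsupp T i lam -> (i <= k)%N -> comb T lam k = 0.
Proof.
move=> w_lam ik; rewrite combE lincomb_ffunE; apply: lincomb_eq0 => p /w_lam[p_i _].
by rewrite eE; case: eqP => // kp; move: p_i; rewrite -kp ltnNge ik.
Qed.

Lemma candec_exists i v : sumker T i v -> exists lam, [/\ wsupp T i lam,
    {in msupp lam, forall p, ~ ltsyz T i p} & \sum_(j < n) comb T lam j = v].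
Proof.
case=> x [Tx ->].
(* Expand v through the T_j-decompositions, then reduce modulo expansions of
   syzygies to get rid of lt(syz). *)
pose lam0 := \sum_(j < n | (j < i)%N)
  lincomb (fun g => << (j, g) >> : coefs) (Tdec (T j) (x j)).
have w_lam0 : wsupp T i lam0.
  apply: (subspace_sum (wsupp_subspace i)) => j ji.
  apply: (subspace_lincomb (wsupp_subspace i)) => g g_red p.
  by rewrite in_msuppU1 => /eqP ->; split => //; apply: (Tdec_spec (T_redop j) (Tx j)).1.
have sum_lam0 : \sum_(k < n) comb T lam0 k = \sum_(j < n | (j < i)%N) x j.
  rewrite sum_comb linear_sum; apply: eq_bigr => j _.
  by rewrite /= lincomb_comp; exact: esym (Tdec_spec (T_redop j) (Tx j)).2.
pose P s := wsupp T i s /\ \sum_(k < n) comb T s k = 0.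
have P_sub : subspace P.
  split; first by split; [apply: subspace0 (wsupp_subspace i) | rewrite sum_comb linear0].
  move=> a u w [wu su] [ww sw]; split; first exact: subspaceZD (wsupp_subspace i) _ _ _ wu ww.
  by rewrite sum_comb linearP /= -!sum_comb su sw scaler0 addr0.
have ltsyz_lead p : ltsyz T i p -> exists2 t, P t &
    p \in msupp t /\ {in msupp t, forall q, (q == p) || lexlt q p}.
  by case=> t [wt _ st /ltp_Some t_lead]; exists t.
have [s [ws ss] s_nf] := reduce_exists (lexlt_wf wf_G) (@lexlt_trans _ _ _)
  (@lexlt_total _ _ _) P_sub ltsyz_lead lam0.
exists (lam0 - s); split => //; first exact: (subspaceB (wsupp_subspace i) w_lam0 ws).
by rewrite sum_comb linearB /= -!sum_comb sum_lam0 ss subr0.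
Qed.

Lemma candec_spec i v : sumker T i v ->
  wsupp T i (candec T i v) /\ \sum_(j < n) comb T (candec T i v) j = v.
Proof. by move/candec_exists/(epsilon_spec (inhabits 0)) => []. Qed.

Lemma vvec_ker (i : 'I_n) g0 : Uop T i (vvec T i g0) = 0 /\ T i (vvec T i g0) = 0.
Proof. by apply/(JopP i).2; apply: (redvec_ker (JopP i).1). Qed.

Lemma vvec_sumker (i : 'I_n) g0 : sumker T i (vvec T i g0).
Proof. by apply/(UopP i).2; case: (vvec_ker i g0). Qed.

Lemma svecE (i : 'I_n) g0 : svec T i g0 =
  lincomb (e T i) (Tdec (T i) (vvec T i g0)) - comb T (candec T i (vvec T i g0)).
Proof. by []. Qed.

Lemma svec_comp (i k : 'I_n) g0 : svec T i g0 k =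
  lincomb (fun g => e T i g k) (Tdec (T i) (vvec T i g0))
  - comb T (candec T i (vvec T i g0)) k.
Proof. by rewrite svecE !ffunE lincomb_ffunE. Qed.

Lemma svec_gt (i k : 'I_n) g0 : (i < k)%N -> svec T i g0 k = 0.
Proof.
move=> ik; rewrite svec_comp (comb_wsupp_eq0 _ (ltnW ik)) ?subr0.
  by apply: lincomb_eq0 => g _; rewrite eE; case: eqP => // ki; move: ik; rewrite ki ltnn.
exact: (candec_spec (vvec_sumker i g0)).1.
Qed.

Lemma svec_self (i : 'I_n) g0 : svec T i g0 i = vvec T i g0.
Proof.
rewrite svec_comp (comb_wsupp_eq0 _ (leqnn i)) ?subr0; last first.
  exact: (candec_spec (vvec_sumker i g0)).1.
rewrite [RHS](Tdec_spec (T_redop i) (vvec_ker i g0).2).2.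
by apply: eq_lincomb => g _; rewrite eE eqxx.
Qed.

Lemma svec_syz (i : 'I_n) g0 : syz T (svec T i g0).
Proof.
set mu := Tdec (T i) (vvec T i g0); set lam := candec T i (vvec T i g0).
split => [k|].
  rewrite svec_comp linearB /= combE lincomb_ffunE !(linear_lincomb (T k)).
  by rewrite !lincomb_eq0 ?subr0 // => p _; apply: e_ker.
have -> : \sum_(k < n) svec T i g0 k =
    \sum_(k < n) lincomb (e T i) mu k - \sum_(k < n) comb T lam k.
  by rewrite -sumrB; apply: eq_bigr => k _; rewrite svecE !ffunE.
rewrite (candec_spec (vvec_sumker i g0)).2 sum_lincomb_ffun.
have -> : lincomb (fun g => \sum_(k < n) e T i g k) mu = lincomb (redvec (T i)) mu.
  by apply: eq_lincomb => g _; apply: sum_e.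
by rewrite [X in _ - X](Tdec_spec (T_redop i) (vvec_ker i g0).2).2 subrr.
Qed.

Lemma svec_coeff (i : 'I_n) g0 : red (Jop T i) g0 -> (svec T i g0 i)@_g0 = 1.
Proof. by move=> g0_red; rewrite svec_self; apply: (redvec_coeff (JopP i).1). Qed.

Lemma svec_tlead (i : 'I_n) g0 : red (Jop T i) g0 -> tlead (svec T i g0) (i, g0).
Proof.
move=> g0_red; split => /=.
- apply/eqP => s0; move: (svec_coeff g0_red).
  by rewrite s0 mcoeff0 => /eqP; rewrite eq_sym oner_eq0.
- by move=> k; apply: svec_gt.
- by rewrite svec_self; apply: (redvec_ltm (JopP i).1).
Qed.

Lemma Bset_spec m x : Bset T m x <-> exists (i : 'I_n) g0,
  [/\ (0 < i)%N, (i < m)%N, red (Jop T i) g0 & x = svec T i g0].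
Proof.
elim: m => [|m IH] /=; first by split => // -[i [g0 []]].
split.
  case=> [/IH [i [g0 [i_gt0 im g0_red ->]]] | [i [g0 [<- i_gt0 g0_red ->]]]].
    by exists i, g0; split => //; rewrite ltnW.
  by exists i, g0.
move=> [i [g0 [i_gt0]]]; rewrite ltnS leq_eqVlt => /orP[/eqP im | im] g0_red xE.
  by right; exists i, g0; rewrite -im.
by left; apply/IH; exists i, g0.
Qed.

Lemma Bset_tlead b : Bset T n b -> exists (i : 'I_n) g0, b = svec T i g0 /\ tlead b (i, g0).
Proof.
by case/Bset_spec => i [g0 [_ _ g0_red ->]]; exists i, g0; split => //; apply: svec_tlead.
Qed.

Lemma Bset_tlead_inj b b' p : Bset T n b -> Bset T n b' -> tlead b p -> tlead b' p -> b = b'.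
Proof.
move=> /Bset_tlead[i [g [-> lb]]] /Bset_tlead[i' [g' [-> lb']]].
by move=> /(tlead_uniq lb) <- /(tlead_uniq lb') [-> ->].
Qed.

Lemma syz_subspace : subspace (syz T).
Proof.
split.
  by split=> [j|]; rewrite ?ffunE ?linear0 // big1 // => j _; rewrite ffunE.
move=> a x y [Tx sx] [Ty sy]; split => [j|].
  by rewrite !ffunE linearP /= Tx Ty scaler0 addr0.
under eq_bigr => j _ do rewrite !ffunE.
by rewrite big_split /= -scaler_sumr sx sy scaler0 addr0.
Qed.

Lemma syz_top_sumker w (i : 'I_n) : syz T w ->
  (forall j : 'I_n, (i < j)%N -> w j = 0) -> sumker T i (w i).
Proof.
case=> Tw sw w_gt; exists (fun j => - w j); split => [j|].
  by rewrite linearN /= Tw oppr0.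
have top : \sum_(j < n | ~~ (j < i)%N) w j = w i.
  rewrite (bigD1 i) ?ltnn //= big1 ?addr0 // => j /andP[ij ji]; apply: w_gt.
  rewrite ltn_neqAle leqNgt ij andbT.
  by apply: contraNneq ji => /val_inj ->.
move: sw; rewrite (bigID (fun j : 'I_n => (j < i)%N)) /= top addrC => /eqP.
by rewrite addr_eq0 => /eqP ->; rewrite sumrN.
Qed.

Lemma syz_spanned p w : syz T w -> tlead w p -> spanned (Bset T n) w.
Proof.
elim/(well_founded_ind (@lexlt_wf _ _ n wf_G)): p w => -[i g] IH w w_syz lw.
have [wi_neq0 w_gt lt_wi] := lw.
have wi_sumker : sumker T i (w i) := syz_top_sumker w_syz w_gt.
have Jwi : Jop T i (w i) = 0.
  by apply/(JopP i).2; split; [apply/(UopP i).2 | exact: w_syz.1 i].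
have g_red : red (Jop T i) g := ker_ltm_red (JopP i).1 Jwi lt_wi.
have i_gt0 : (0 < i)%N.
  rewrite lt0n; apply: contraNneq wi_neq0 => i0.
  by move: wi_sumker; rewrite i0 => /sumker0/eqP.
have svec_B : Bset T n (svec T i g) by apply/Bset_spec; exists i, g.
set c := (w i)@_g.
have -> : w = c *: svec T i g + (w - c *: svec T i g) by rewrite addrC subrK.
apply: spannedZD svec_B _.
have [-> | [q lq qp]] := tlead_cancel lw (svec_tlead g_red) (svec_coeff g_red).
  exact: spanned0.
apply: IH qp _ _ lq; apply: (subspaceB syz_subspace w_syz).
exact (subspaceZ syz_subspace _ (svec_syz i g)).
Qed.

End Family.

Theorem mainTheorem3 (K : fieldType) (d : Order.disp_t) (G : orderType d)
    (wf_G : well_founded (fun x y : G => (x < y)%O))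
    (n : nat) (T : 'I_n -> {malg K[G]} -> {malg K[G]})
    (n_gt0 : (0 < n)%N) (redT : forall j, is_redop (T j)) :
  is_basis (syz T) (Bset T n).
Proof.
split.
- by move=> b /Bset_spec[i [g0 [_ _ _ ->]]]; apply: (svec_syz wf_G redT).
- move=> s c s_uniq s_B; apply: tlead_free => // [b /s_B | b b' /s_B Bb /s_B Bb' p].
    by case/(Bset_tlead wf_G redT) => i [g0 [_ lb]]; exists (i, g0).
  exact: (Bset_tlead_inj wf_G redT) Bb Bb'.
- move=> w w_syz; have [-> | /tlead_exists[p lp]] := eqVneq w 0.
    by exists [::], (fun _ => 0); rewrite big_nil.
  have [lam lam_B ->] := syz_spanned wf_G redT w_syz lp.
  by exists (msupp lam), (fun b => lam@_b).
Qed.
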